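(* Let $F$ be any field and let $n,p$ be positive integers with $p>1$, $n\ge p$ and $p\mid n$. Then there exists an $(n,p)$ block invertible square matrix over $F$; that is, there exists an invertible $n\times n$ matrix $M$ over $F$ such that, when $M$ is partitioned into $(n/p)^2$ contiguous $p\times p$ blocks $B_{i,j}$ ($1\le i,j\le n/p$), every block $B_{i,j}$ is an invertible $p\times p$ matrix.
   Context: For positive integers $a,b,p$ with $p\mid a$ and $p\mid b$, an $a\times b$ matrix (with $a$ rows and $b$ columns) over $F$ is partitioned into $p\times p$ blocks $B_{i,j}$, where $B_{i,j}$ is the submatrix formed by rows $(i-1)p+1,\dots,ip$ and columns $(j-1)p+1,\dots,jp$. Such a matrix is called block invertible (with block size $p$) if every block $B_{i,j}$ is invertible. An $n\times n$ matrix is an $(n,p)$ block invertible square matrix if it is block invertible with block size $p$ and is itself invertible. *)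

From HB Require Import structures.
From mathcomp Require Import all_boot all_order all_algebra.
Set Implicit Arguments. Unset Strict Implicit. Unset Printing Implicit Defensive.
Import GRing.Theory.
Local Open Scope ring_scope.

(* Entry of A at natural indices (r, c); 0 if out of range (never used
   out of range in block_of below). *)
Definition mx_nat {F : fieldType} {a b : nat} (A : 'M[F]_(a, b)) (r c : nat) : F :=
  match @insub _ (fun k => (k < a)%N) 'I_a r, @insub _ (fun k => (k < b)%N) 'I_b c with
  | Some r', Some c' => A r' c'
  | _, _ => 0
  end.

Definition block_of {F : fieldType} {a b : nat} (p : nat) (A : 'M[F]_(a, b)) (i j : nat)
  : 'M[F]_p :=
  \matrix_(r < p, c < p) mx_nat A (i * p + r) (j * p + c).

Definition block_invertible {F : fieldType} {a b : nat} (p : nat) (A : 'M[F]_(a, b)) : Prop :=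
  [/\ (p %| a)%N, (p %| b)%N &
   forall i j : nat, (i < a %/ p)%N -> (j < b %/ p)%N ->
     block_of p A i j \in unitmx].

Definition block_invertible_square {F : fieldType} {n : nat} (p : nat) (M : 'M[F]_n) : Prop :=
  block_invertible p M /\ M \in unitmx.

(* Put A on and below the block diagonal and B strictly above it.  Subtracting
   consecutive block columns j and j+1 leaves A - B in block row j only, and
   block column 0 is A throughout; so if A and A - B are invertible, a vector
   in the left kernel vanishes block by block.  It remains to find three
   invertible p x p matrices A, B, A - B over an arbitrary field (impossible
   for p = 1 over GF(2)): take A = 1 + N with N the superdiagonal shift and
   B = A - P with P the cyclic shift, so that B = 1 - e_(p-1,0) is lower
   unitriangular when p >= 2. *)
From mathcomp Require Import all_boot all_order all_algebra.
From mathcomp Require Import perm zify.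
Set Implicit Arguments. Unset Strict Implicit. Unset Printing Implicit Defensive.
Import GRing.Theory.
Local Open Scope ring_scope.

Lemma mx_natE (F : fieldType) a b (A : 'M[F]_(a, b)) (r : 'I_a) (c : 'I_b) :
  mx_nat A r c = A r c.
Proof.
rewrite /mx_nat (insubT (fun k => (k < a)%N) (ltn_ord r)).
rewrite (insubT (fun k => (k < b)%N) (ltn_ord c)).
by congr (A _ _); apply: val_inj.
Qed.

Lemma mx_nat_rowE (F : fieldType) b (v : 'rV[F]_b) (c : 'I_b) : mx_nat v 0 c = v 0 c.
Proof. exact: (mx_natE v ord0). Qed.

Lemma mx_nat0 (F : fieldType) a b r c : mx_nat (0 : 'M[F]_(a, b)) r c = 0.
Proof.
rewrite /mx_nat; case: (@insub _ (fun k => (k < a)%N) 'I_a r) => [r'|] //.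
by case: (@insub _ (fun k => (k < b)%N) 'I_b c) => [c'|] //; rewrite mxE.
Qed.

Lemma sumr_blocks (V : nmodType) n k p (f : nat -> V) : n = (k * p)%N ->
  \sum_(r < n) f r = \sum_(i < k) \sum_(s < p) f (i * p + s)%N.
Proof.
move=> ->; rewrite -(big_mkord xpredT) big_nat_mul big_mkord.
apply: eq_bigr => i _; rewrite -{1}[(i * p)%N]add0n mulSnr big_addn addKn big_mkord.
by apply: eq_bigr => s _; rewrite addnC.
Qed.

Section ShiftPair.
Variables (F : fieldType) (q : nat).
Local Notation p := q.+2.

Definition upper_bidiag_mx : 'M[F]_p :=
  \matrix_(i, j) ((i == j)%:R + (i.+1 == j :> nat)%:R).

Definition cyclic_shift_mx : 'M[F]_p := perm_mx (perm (@ordS_inj p)).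

Definition corner_mx : 'M[F]_p := upper_bidiag_mx - cyclic_shift_mx.

Lemma cyclic_shift_mxE (i j : 'I_p) : cyclic_shift_mx i j = (ordS i == j)%:R.
Proof. by rewrite /cyclic_shift_mx /perm_mx !mxE permE. Qed.

Lemma corner_mxE (i j : 'I_p) :
  corner_mx i j = (i == j)%:R + (i.+1 == j :> nat)%:R - (ordS i == j)%:R.
Proof. by rewrite mxE [(- cyclic_shift_mx) i j]mxE cyclic_shift_mxE mxE. Qed.

Lemma upper_bidiag_mx_unit : upper_bidiag_mx \in unitmx.
Proof.
rewrite unitmxE -det_tr det_trig; last first.
  by apply/is_trig_mxP => i j lt_ij; rewrite !mxE -val_eqE /= !gtn_eqF ?addr0 // leqW.
by rewrite big1 ?unitr1 // => i _; rewrite !mxE eqxx gtn_eqF // addr0.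
Qed.

Lemma corner_mx_unit : corner_mx \in unitmx.
Proof.
rewrite unitmxE det_trig.
  rewrite big1 ?unitr1 // => i _.
  rewrite corner_mxE eqxx gtn_eqF // addr0 -val_eqE /=.
  have := ltn_ord i; rewrite leq_eqVlt => /predU1P[last_i | lt_ip].
    by rewrite last_i modnn eq_sym gtn_eqF ?subr0 // -ltnS last_i.
  by rewrite modn_small // gtn_eqF ?subr0.
apply/is_trig_mxP => i j lt_ij.
have lt_ip : (i.+1 < p)%N by apply: leq_trans lt_ij (ltn_ord j).
by rewrite corner_mxE -!val_eqE /= ltn_eqF // add0r modn_small // subrr.
Qed.

Lemma upper_bidiag_sub_corner_mx_unit :
  upper_bidiag_mx - corner_mx \in unitmx.
Proof. by rewrite /corner_mx opprB addrC subrK unitmx_perm. Qed.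

End ShiftPair.

Section Staircase.
Variables (F : fieldType) (m : nat) (A B : 'M[F]_m).
Hypotheses (A_unit : A \in unitmx) (AsubB_unit : A - B \in unitmx).

Definition staircase (i j : nat) : 'M[F]_m := if (j <= i)%N then A else B.

Lemma staircase_subS i j :
  staircase i j - staircase i j.+1 = if i == j then A - B else 0.
Proof. by rewrite /staircase; case: (ltngtP i j); rewrite ?subrr. Qed.

Lemma staircase_left_kernel k (W : nat -> 'rV[F]_m) :
  (forall j, (j < k)%N -> \sum_(i < k) W i *m staircase i j = 0) ->
  forall i, (i < k)%N -> W i = 0.
Proof.
move=> col0 i lt_ik.
have unit_kernel (C : 'M[F]_m) (v : 'rV_m) : C \in unitmx -> v *m C = 0 -> v = 0.
  by move=> C_unit vC0; rewrite -(mulmxK C_unit v) vC0 mul0mx.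
have below_last j : (j.+1 < k)%N -> W j = 0.
  move=> lt_jk; apply: unit_kernel _ _ AsubB_unit _.
  transitivity (\sum_(i' < k) W i' *m (staircase i' j - staircase i' j.+1)).
    rewrite (bigD1 (Ordinal (ltnW lt_jk))) //= staircase_subS eqxx.
    rewrite big1 ?addr0 // => i' ne_i'j.
    by rewrite -val_eqE in ne_i'j; rewrite staircase_subS ifN ?mulmx0.
  under eq_bigr do rewrite mulmxBr.
  by rewrite sumrB !col0 ?subrr // ltnW.
case: k col0 below_last lt_ik => // k col0 below_last lt_ik.
have := col0 0%N isT; rewrite /staircase big_ord_recr /= big1 ?add0r => [lastA0|i' _].
  rewrite ltnS leq_eqVlt in lt_ik; case/predU1P: lt_ik => [-> | lt_ik].
    exact: unit_kernel _ _ A_unit lastA0.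
  exact: below_last.
by rewrite below_last ?mul0mx //= ltnS.
Qed.

End Staircase.

Section BlockMatrix.
Variables (F : fieldType) (n k d : nat).
Hypothesis n_eq : n = (k * d.+1)%N.
Local Notation p := d.+1.

Definition mx_of_blocks (X : nat -> nat -> 'M[F]_p) : 'M[F]_n :=
  \matrix_(r, c) X (r %/ p)%N (c %/ p)%N (inord (r %% p)) (inord (c %% p)).

Definition row_block (v : 'rV[F]_n) (i : nat) : 'rV[F]_p :=
  \row_s mx_nat v 0 (i * p + s)%N.

Lemma block_index_lt i (s : 'I_p) : (i < k)%N -> (i * p + s < n)%N.
Proof. by rewrite n_eq; have := ltn_ord s; nia. Qed.

Lemma mx_of_blocks_nat X i j (s t : 'I_p) : (i < k)%N -> (j < k)%N ->
  mx_nat (mx_of_blocks X) (i * p + s) (j * p + t) = X i j s t.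
Proof.
move=> lt_ik lt_jk.
rewrite -[(i * p + s)%N]/(val (Ordinal (block_index_lt s lt_ik))).
rewrite -[(j * p + t)%N]/(val (Ordinal (block_index_lt t lt_jk))).
rewrite mx_natE mxE /= !divnMDl // !divn_small // !addn0.
by rewrite !modnMDl !modn_small // !inord_val.
Qed.

Lemma block_of_mx_of_blocks X i j : (i < k)%N -> (j < k)%N ->
  block_of p (mx_of_blocks X) i j = X i j.
Proof. by move=> lt_ik lt_jk; apply/matrixP => s t; rewrite mxE mx_of_blocks_nat. Qed.

Lemma row_block0 j : row_block 0 j = 0.
Proof. by apply/rowP => s; rewrite !mxE mx_nat0. Qed.

Lemma row_block_mul X v j : (j < k)%N ->
  row_block (v *m mx_of_blocks X) j = \sum_(i < k) row_block v i *m X i j.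
Proof.
move=> lt_jk; apply/rowP => t; rewrite mxE summxE.
rewrite -[(j * p + t)%N]/(val (Ordinal (block_index_lt t lt_jk))) mx_nat_rowE mxE.
under eq_bigr => r _ do rewrite -mx_nat_rowE -(mx_natE (mx_of_blocks X)).
pose f r := mx_nat v 0 r * mx_nat (mx_of_blocks X) r (j * p + t).
rewrite (sumr_blocks f n_eq); apply: eq_bigr => i _; rewrite mxE.
by apply: eq_bigr => s _; rewrite !mxE /f mx_of_blocks_nat.
Qed.

Lemma row_blocks_eq0 v : (forall i, (i < k)%N -> row_block v i = 0) -> v = 0.
Proof.
move=> v_blocks0; apply/rowP => r; rewrite mxE.
have lt_rk : (r %/ p < k)%N by rewrite ltn_divLR // -n_eq.
have := congr1 (fun w : 'rV_p => w 0 (Ordinal (ltn_pmod r (ltn0Sn d))))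
  (v_blocks0 _ lt_rk).
by rewrite !mxE /= -divn_eq mx_nat_rowE.
Qed.

Lemma mx_of_staircase_unit (A B : 'M[F]_p) :
  A \in unitmx -> A - B \in unitmx -> mx_of_blocks (staircase A B) \in unitmx.
Proof.
move=> A_unit AsubB_unit; rewrite -row_free_unit; apply: inj_row_free => v vM0.
apply: row_blocks_eq0.
apply: (staircase_left_kernel A_unit AsubB_unit (W := row_block v)) => j lt_jk.
by rewrite -row_block_mul // vM0 row_block0.
Qed.

End BlockMatrix.

Theorem mainTheorem2 (F : fieldType) (n p : nat)
  (hp : (1 < p)%N) (hnp : (p <= n)%N) (hdvd : (p %| n)%N) :
  exists M : 'M[F]_n, block_invertible_square p M.
Proof.
case: p hp hnp hdvd => [|[|q]] // _ _ hdvd.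
have n_eq : n = (n %/ q.+2 * q.+2)%N by rewrite divnK.
pose A := upper_bidiag_mx F q; pose B := corner_mx F q.
exists (mx_of_blocks n (staircase A B)); split.
  split => // i j lt_ik lt_jk; rewrite (block_of_mx_of_blocks n_eq) // /staircase.
  by case: ifP => _; [apply: upper_bidiag_mx_unit | apply: corner_mx_unit].
exact: (mx_of_staircase_unit n_eq)
  (upper_bidiag_mx_unit F q) (upper_bidiag_sub_corner_mx_unit F q).
Qed.
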